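(* Each of the axioms (A1), (A3), (A4) is independent of the other two in the presence of (A2). Specifically: (a) The rule $C_\lambda(R)=\sum_i\frac{\lambda_i}{\bar\lambda}R_i$ satisfies (A1), (A2), (A3) but not (A4). (b) The rule defined by $C_\lambda(R)=q^{-1}\!\left(\frac{\sum_i\lambda_iq(R_i)}{\sum_i\lambda_i}\right)$ when $n\in\{1,2\}$ and $C_\lambda(R)=\frac{\sum_i\lambda_iR_i}{\sum_i\lambda_i}$ when $n\ge3$ satisfies (A1), (A2), (A4) but not (A3). (c) Fix $\eta>0$; with $w_i=\lambda_i/\bar\lambda$ and Shannon entropy $H(w)=-\sum_iw_i\log w_i$ (natural logarithm), the rule $C_\lambda(R)=q^{-1}\!\left(\sum_iw_iq(R_i)+\eta H(w)\right)$ satisfies (A2), (A3), (A4) but not (A1).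
   Context: Let $q(r)=10^{r/400}$, $q^{-1}(s)=400\log_{10}s$ ($s>0$), and $E(a,b)=1/(1+10^{(b-a)/400})$. A combined rating rule assigns to every $n\ge1$ and every $\lambda\in(0,\infty)^n$ a function $C_\lambda:\mathbb{R}^n\to\mathbb{R}$. Write $\bar\lambda=\sum_i\lambda_i$; for nonempty $B\subseteq\{1,\dots,n\}$, $R_B=(R_i)_{i\in B}$, $\lambda_B=(\lambda_i)_{i\in B}$ (inherited increasing order), $\bar\lambda_B=\sum_{i\in B}\lambda_i$; $\mathbf 1$ is the all-ones vector. (A1) Same-scale normalization: $C_\lambda(r\mathbf 1)=r$ for all $\lambda$ and $r\in\mathbb{R}$. (A2) Regularity and monotonicity: for each $n$, $(\lambda,R)\mapsto C_\lambda(R)$ is continuous on $(0,\infty)^n\times\mathbb{R}^n$; for each fixed $\lambda$, $C_\lambda$ is continuously differentiable with $\partial_iC_\lambda(R)>0$ for all $i$, $R$. (A3) Recursive consistency: for every ordered partition $(B_1,\dots,B_m)$ of $\{1,\dots,n\}$ into nonempty blocks, $C_\lambda(R)=C_{(\bar\lambda_{B_1},\dots,\bar\lambda_{B_m})}\big(C_{\lambda_{B_1}}(R_{B_1}),\dots,C_{\lambda_{B_m}}(R_{B_m})\big)$. (A4) Marginal Elo-strength consistency: for all $x,y\in\mathbb{R}$, $\partial_xC_{(1,1)}(x,y)/\partial_yC_{(1,1)}(x,y)=E(x,y)/(1-E(x,y))=10^{(x-y)/400}$. *)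

From Stdlib Require Import Reals List Arith.
From Coquelicot Require Import Coquelicot.
Import ListNotations.
Open Scope R_scope.

(* Vectors in R^n are represented as lists of length n (index i = position i,
   0-based).  A combined rating rule is a function C : (lambda, R) |-> C_lambda(R);
   its values on lists of mismatched/zero length are irrelevant: all axioms only
   inspect lists with length lambda = length R = n >= 1 and lambda > 0. *)
Definition rule := list R -> list R -> R.

Definition lsum (l : list R) : R := fold_right Rplus 0 l.

Definition qf (r : R) : R := Rpower 10 (r / 400).
Definition qinv (s : R) : R := 400 * (ln s / ln 10).
Definition Elo (a b : R) : R := 1 / (1 + Rpower 10 ((b - a) / 400)).

Definition pos_vec (l : list R) : Prop := List.Forall (fun x => 0 < x) l.

Definition close (n : nat) (d : R) (a b : list R) : Prop :=
  forall i, (i < n)%nat -> Rabs (nth i a 0 - nth i b 0) < d.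

Definition upd (l : list R) (i : nat) (t : R) : list R :=
  firstn i l ++ t :: skipn (S i) l.

(* sub-vector x_B for the block B = { i | b i = j }, in inherited increasing order *)
Definition sub (l : list R) (b : nat -> nat) (j : nat) : list R :=
  map snd (filter (fun p => Nat.eqb (b (fst p)) j) (combine (seq 0 (length l)) l)).

Definition Ax1 (C : rule) : Prop :=
  forall (lam : list R) (r : R), lam <> nil -> pos_vec lam ->
    C lam (repeat r (length lam)) = r.

Definition Ax2 (C : rule) : Prop :=
  forall n : nat, (1 <= n)%nat ->
  (forall lam x, length lam = n -> length x = n -> pos_vec lam ->
     forall eps, 0 < eps -> exists delta, 0 < delta /\
       forall lam' x', length lam' = n -> length x' = n -> pos_vec lam' ->
         close n delta lam' lam -> close n delta x' x ->
         Rabs (C lam' x' - C lam x) < eps)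
  /\
  (forall lam, length lam = n -> pos_vec lam ->
     exists D : nat -> list R -> R,
       (forall i x, (i < n)%nat -> length x = n ->
          is_derive (fun t => C lam (upd x i t)) (nth i x 0) (D i x))
       /\ (forall i x, (i < n)%nat -> length x = n ->
          forall eps, 0 < eps -> exists delta, 0 < delta /\
            forall x', length x' = n -> close n delta x' x ->
              Rabs (D i x' - D i x) < eps)
       /\ (forall i x, (i < n)%nat -> length x = n -> 0 < D i x)).

(* (A3) recursive consistency; an ordered partition (B_1,...,B_m) of the index
   set {0,...,n-1} into nonempty blocks is encoded by a labelling b with
   b i < m for i < n and every label j < m used; block j is { i | b i = j }. *)
Definition Ax3 (C : rule) : Prop :=
  forall (n : nat) (lam x : list R), (1 <= n)%nat ->
    length lam = n -> length x = n -> pos_vec lam ->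
    forall (m : nat) (b : nat -> nat),
      (forall i, (i < n)%nat -> (b i < m)%nat) ->
      (forall j, (j < m)%nat -> exists i, (i < n)%nat /\ b i = j) ->
      C lam x =
      C (map (fun j => lsum (sub lam b j)) (seq 0 m))
        (map (fun j => C (sub lam b j) (sub x b j)) (seq 0 m)).

Definition Ax4 (C : rule) : Prop :=
  forall x y : R, exists dx dy : R,
    is_derive (fun t => C [1; 1] [t; y]) x dx /\
    is_derive (fun t => C [1; 1] [x; t]) y dy /\
    dx / dy = Elo x y / (1 - Elo x y) /\
    Elo x y / (1 - Elo x y) = Rpower 10 ((x - y) / 400).

Definition rule_a : rule := fun lam x =>
  lsum (map (fun p => fst p / lsum lam * snd p) (combine lam x)).

Definition rule_b : rule := fun lam x =>
  if Nat.leb (length lam) 2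
  then qinv (lsum (map (fun p => fst p * qf (snd p)) (combine lam x)) / lsum lam)
  else lsum (map (fun p => fst p * snd p) (combine lam x)) / lsum lam.

Definition weights (lam : list R) : list R := map (fun l => l / lsum lam) lam.
Definition entropy (w : list R) : R := - lsum (map (fun a => a * ln a) w).
Definition rule_c (eta : R) : rule := fun lam x =>
  let w := weights lam in
  qinv (lsum (map (fun p => fst p * qf (snd p)) (combine w x)) + eta * entropy w).

(* All three rules are shifted quasi-arithmetic means
     C_lam(R) = g^-1 ((sum_i lam_i g(R_i) + s(lam)) / sum_i lam_i):
   (a) is g = id, s = 0; (b) is g = q, s = 0 for n <= 2 and rule (a) for n >= 3; (c) is g = q,
   s(lam) = eta (sum_i lam_i) H(w).
   For a C^1 generator with g' > 0 and (g^-1)' > 0 such a mean satisfies (A2). It satisfies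
   (A1) iff s vanishes, and (A3) as soon as s is additive under grouping,
   s(lam) = s(block sums) + sum_B s(lam_B), which for the entropy shift is the chain rule of
   entropy. At lam = (1,1) the ratio of its two partial derivatives is g'(x) / g'(y): the Elo
   odds 10^((x-y)/400) for g = q, but 1 for g = id. Rule (b) fails (A3) because grouping
   three players into blocks of sizes 1 and 2 mixes its two regimes. *)

From Pilot Require Import Defs.
From Stdlib Require Import Reals List Arith Lra Lia FunctionalExtensionality.
From Coquelicot Require Import Coquelicot.
Import ListNotations.
Open Scope R_scope.

Lemma lsum_map_ext {A} (f g : A -> R) l :
  (forall a, In a l -> f a = g a) -> lsum (map f l) = lsum (map g l).
Proof. intros H; f_equal; apply map_ext_in, H. Qed.

Lemma lsum_map_plus {A} (f g : A -> R) l :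
  lsum (map (fun a => f a + g a) l) = lsum (map f l) + lsum (map g l).
Proof. induction l as [|a l IH]; simpl; [ring | rewrite IH; ring]. Qed.

Lemma lsum_map_minus {A} (f g : A -> R) l :
  lsum (map (fun a => f a - g a) l) = lsum (map f l) - lsum (map g l).
Proof. induction l as [|a l IH]; simpl; [ring | rewrite IH; ring]. Qed.

Lemma lsum_map_scal {A} (c : R) (f : A -> R) l :
  lsum (map (fun a => c * f a) l) = c * lsum (map f l).
Proof. induction l as [|a l IH]; simpl; [ring | rewrite IH; ring]. Qed.

Lemma lsum_map_zero {A} (l : list A) : lsum (map (fun _ => 0) l) = 0.
Proof. induction l as [|a l IH]; simpl; [ring | rewrite IH; ring]. Qed.

Lemma lsum_map_nonneg {A} (f : A -> R) l :
  (forall a, In a l -> 0 <= f a) -> 0 <= lsum (map f l).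
Proof.
  induction l as [|a l IH]; simpl; intros H; [lra|].
  assert (0 <= f a) by auto. assert (0 <= lsum (map f l)) by auto. lra.
Qed.

Lemma lsum_map_pos {A} (f : A -> R) l :
  l <> nil -> (forall a, In a l -> 0 < f a) -> 0 < lsum (map f l).
Proof.
  destruct l as [|a l]; intros Hl H; [congruence|]; simpl.
  assert (0 < f a) by (apply H; left; reflexivity).
  assert (0 <= lsum (map f l))
    by (apply lsum_map_nonneg; intros; apply Rlt_le, H; right; assumption).
  lra.
Qed.

Lemma pos_vec_In l a : pos_vec l -> In a l -> 0 < a.
Proof. unfold pos_vec; rewrite Forall_forall; auto. Qed.

Lemma length_pos_nonnil {A} (l : list A) : (0 < length l)%nat -> l <> nil.
Proof. destruct l; simpl; [lia | discriminate]. Qed.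

Lemma lsum_pos l : pos_vec l -> l <> nil -> 0 < lsum l.
Proof.
  intros P Hl; rewrite <- (map_id l); apply lsum_map_pos; auto.
  intros; eapply pos_vec_In; eauto.
Qed.

Lemma In_le_lsum l a : pos_vec l -> In a l -> a <= lsum l.
Proof.
  induction l as [|c l IH]; simpl; intros P Ha; [contradiction|].
  inversion_clear P as [|? ? Pc Pl]; destruct Ha as [->|H].
  - assert (0 <= lsum l) by (rewrite <- (map_id l); apply lsum_map_nonneg;
      intros; apply Rlt_le; eapply pos_vec_In; eauto). lra.
  - specialize (IH Pl H). lra.
Qed.

Lemma length_upd (l : list R) i t : (i < length l)%nat -> length (upd l i t) = length l.
Proof.
  intros Hi; unfold upd; rewrite length_app; cbn [length].
  rewrite length_firstn, length_skipn; lia.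
Qed.

Definition wsum (g : R -> R) (l y : list R) : R :=
  lsum (map (fun p => fst p * g (snd p)) (combine l y)).

Lemma wsum_repeat g l r : wsum g l (repeat r (length l)) = g r * lsum l.
Proof. induction l as [|a l IH]; unfold wsum in *; simpl; [ring | rewrite IH; ring]. Qed.

Lemma wsum_upd g l y i t : length l = length y -> (i < length y)%nat ->
  wsum g l (upd y i t) = wsum g l y + nth i l 0 * (g t - g (nth i y 0)).
Proof.
  revert l i; induction y as [|a y IH]; intros [|c l] i L Hi; simpl in *; try lia.
  unfold wsum in *; destruct i as [|i]; [unfold upd; simpl; ring|].
  change (upd (a :: y) (S i) t) with (a :: upd y i t); simpl.
  rewrite IH by lia; unfold lsum; simpl; ring.
Qed.

Lemma wsum_map {A} g (f h : A -> R) l :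
  wsum g (map f l) (map h l) = lsum (map (fun a => f a * g (h a)) l).
Proof. induction l as [|a l IH]; unfold wsum in *; simpl; [|rewrite IH]; reflexivity. Qed.

Lemma wsum_map_div g c l y : wsum g (map (fun a => a / c) l) y = wsum g l y / c.
Proof.
  revert y; induction l as [|a l IH]; intros [|r y]; unfold wsum in *; simpl;
    try (unfold Rdiv; ring).
  rewrite IH; unfold Rdiv; ring.
Qed.

Lemma wsum_pos g l y : (forall r, 0 < g r) -> pos_vec l -> l <> nil ->
  length y = length l -> 0 < wsum g l y.
Proof.
  intros Hg P Hl L; apply lsum_map_pos.
  - destruct l; [congruence|]; destruct y; simpl in *; [lia|congruence].
  - intros [a r] H; apply in_combine_l in H; simpl.
    apply Rmult_lt_0_compat; [eapply pos_vec_In|]; eauto.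
Qed.

Lemma map_snd_combine_seq {A} s (l : list A) : map snd (combine (seq s (length l)) l) = l.
Proof. revert s; induction l; simpl; intros; f_equal; auto. Qed.

Section Blocks.

Variables (b : nat -> nat) (m : nat).

Lemma lsum_indicator k c s : (s <= k < s + m)%nat ->
  lsum (map (fun j => if Nat.eqb k j then c else 0) (seq s m)) = c.
Proof.
  revert s; induction m as [|m' IH]; intros s Hk; [lia|]; simpl.
  destruct (Nat.eqb_spec k s) as [->|Hks].
  - rewrite (lsum_map_ext _ (fun _ => 0)), lsum_map_zero; [ring|].
    intros j Hj; apply in_seq in Hj.
    destruct (Nat.eqb_spec s j); [lia | reflexivity].
  - rewrite IH by lia; ring.
Qed.

Lemma lsum_partition {A} (h : nat * A -> R) L :
  (forall p, In p L -> (b (fst p) < m)%nat) ->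
  lsum (map h L)
  = lsum (map (fun j => lsum (map h (filter (fun p => Nat.eqb (b (fst p)) j) L))) (seq 0 m)).
Proof.
  induction L as [|p L IH]; intros HL; simpl.
  - symmetry; apply lsum_map_zero.
  - rewrite (lsum_map_ext _ (fun j => (if Nat.eqb (b (fst p)) j then h p else 0)
        + lsum (map h (filter (fun p => Nat.eqb (b (fst p)) j) L)))).
    + rewrite lsum_map_plus, lsum_indicator, IH; [reflexivity | |].
      * intros q Hq; apply HL; right; exact Hq.
      * specialize (HL p (or_introl eq_refl)); lia.
    + intros j _; destruct (Nat.eqb (b (fst p)) j); simpl; ring.
Qed.

Lemma combine_sub_from s (l y : list R) j : length l = length y ->
  combine (map snd (filter (fun p => Nat.eqb (b (fst p)) j) (combine (seq s (length l)) l)))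
          (map snd (filter (fun p => Nat.eqb (b (fst p)) j) (combine (seq s (length y)) y)))
  = map snd (filter (fun p => Nat.eqb (b (fst p)) j) (combine (seq s (length l)) (combine l y))).
Proof.
  revert y s; induction l as [|a l IH]; intros [|c y] s L; simpl in *; try lia; auto.
  destruct (Nat.eqb (b s) j); simpl; f_equal; auto.
Qed.

Lemma combine_sub (l y : list R) j : length l = length y ->
  combine (sub l b j) (sub y b j)
  = map snd (filter (fun p => Nat.eqb (b (fst p)) j) (combine (seq 0 (length l)) (combine l y))).
Proof. apply combine_sub_from. Qed.

Lemma length_sub_from s (l y : list R) j : length l = length y ->
  length (filter (fun p => Nat.eqb (b (fst p)) j) (combine (seq s (length y)) y))
  = length (filter (fun p => Nat.eqb (b (fst p)) j) (combine (seq s (length l)) l)).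
Proof.
  revert y s; induction l as [|a l IH]; intros [|c y] s L; simpl in *; try lia; auto.
  destruct (Nat.eqb (b s) j); simpl; auto.
Qed.

Lemma length_sub (l y : list R) j : length l = length y ->
  length (sub y b j) = length (sub l b j).
Proof. intros L; unfold sub; rewrite !length_map; apply length_sub_from, L. Qed.

Lemma lsum_map_sub (f : R -> R) l : (forall i, (i < length l)%nat -> (b i < m)%nat) ->
  lsum (map f l) = lsum (map (fun j => lsum (map f (sub l b j))) (seq 0 m)).
Proof.
  intros Hb; rewrite <- (map_snd_combine_seq 0 l) at 1; rewrite map_map.
  rewrite (lsum_partition (fun p => f (snd p))).
  - apply lsum_map_ext; intros j _; unfold sub; rewrite map_map; reflexivity.
  - intros [i a] H; apply in_combine_l, in_seq in H; apply Hb; simpl in *; lia.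
Qed.

Lemma lsum_sub l : (forall i, (i < length l)%nat -> (b i < m)%nat) ->
  lsum l = lsum (map (fun j => lsum (sub l b j)) (seq 0 m)).
Proof.
  intros Hb; rewrite <- (map_id l) at 1; rewrite (lsum_map_sub (fun a => a) l Hb).
  apply lsum_map_ext; intros; rewrite map_id; reflexivity.
Qed.

Lemma wsum_sub g l y : length l = length y ->
  (forall i, (i < length l)%nat -> (b i < m)%nat) ->
  wsum g l y = lsum (map (fun j => wsum g (sub l b j) (sub y b j)) (seq 0 m)).
Proof.
  intros L Hb; unfold wsum.
  rewrite <- (map_snd_combine_seq 0 (combine l y)), length_combine, <- L, Nat.min_id, map_map.
  rewrite (lsum_partition (fun p => fst (snd p) * g (snd (snd p)))).
  - apply lsum_map_ext; intros j _; rewrite combine_sub, map_map by exact L; reflexivity.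
  - intros [i a] H; apply in_combine_l, in_seq in H; apply Hb; simpl in *; lia.
Qed.

Lemma In_sub l j a : In a (sub l b j) -> In a l.
Proof.
  unfold sub; intros H; apply in_map_iff in H as [[i c] [<- H]].
  apply filter_In in H as [H _]; apply in_combine_r in H; exact H.
Qed.

Lemma pos_vec_sub l j : pos_vec l -> pos_vec (sub l b j).
Proof.
  unfold pos_vec; rewrite !Forall_forall; intros P a H; apply P; eapply In_sub, H.
Qed.

Lemma sub_nonnil l i : (i < length l)%nat -> sub l b (b i) <> nil.
Proof.
  intros Hi; unfold sub.
  assert (Hin : In (i, nth i l 0) (combine (seq 0 (length l)) l)).
  { replace (i, nth i l 0) with (nth i (combine (seq 0 (length l)) l) (0%nat, 0)).
    - apply nth_In; rewrite length_combine, length_seq; lia.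
    - rewrite combine_nth, seq_nth by (rewrite ?length_seq; lia); reflexivity. }
  assert (Hf : In (i, nth i l 0) (filter (fun p => Nat.eqb (b (fst p)) (b i))
                                         (combine (seq 0 (length l)) l)))
    by (apply filter_In; split; [exact Hin | apply Nat.eqb_refl]).
  destruct (filter _ _); [contradiction | discriminate].
Qed.

Lemma sub_block_pos n l j : length l = n -> pos_vec l ->
  (forall j, (j < m)%nat -> exists i, (i < n)%nat /\ b i = j) -> (j < m)%nat ->
  pos_vec (sub l b j) /\ sub l b j <> nil.
Proof.
  intros L P Hs Hj; split; [apply pos_vec_sub, P|].
  destruct (Hs j Hj) as [i [Hi <-]]; apply sub_nonnil; lia.
Qed.

Lemma pos_vec_block_sums n lam : length lam = n -> pos_vec lam ->
  (forall j, (j < m)%nat -> exists i, (i < n)%nat /\ b i = j) ->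
  pos_vec (map (fun j => lsum (sub lam b j)) (seq 0 m)).
Proof.
  intros L P Hs; unfold pos_vec; rewrite Forall_forall; intros a Ha.
  apply in_map_iff in Ha as [j [<- Hj]]; apply in_seq in Hj.
  destruct (sub_block_pos n lam j) as [Pj Nj]; auto; [lia|].
  apply lsum_pos; auto.
Qed.

End Blocks.

Lemma lsum_map_nth (h : R -> R) l :
  lsum (map h l) = lsum (map (fun k => h (nth k l 0)) (seq 0 (length l))).
Proof.
  induction l as [|a l IH]; [reflexivity|]; simpl.
  rewrite <- seq_shift, map_map, IH; reflexivity.
Qed.

Lemma wsum_nth g l y : length l = length y ->
  wsum g l y = lsum (map (fun k => nth k l 0 * g (nth k y 0)) (seq 0 (length l))).
Proof.
  revert y; induction l as [|a l IH]; intros [|c y] L; simpl in *; try lia; [reflexivity|].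
  unfold wsum in *; simpl; rewrite <- seq_shift, map_map, IH by lia; reflexivity.
Qed.

Lemma ex_derive_continuous_R (h : R -> R) a : ex_derive h a -> continuous h a.
Proof. apply (ex_derive_continuous (K := R_AbsRing) (V := R_NormedModule)). Qed.

Lemma ball_Rabs (a e c : R) : ball a e c <-> Rabs (c - a) < e.
Proof. reflexivity. Qed.

Definition jcont (n : nat) (F : list R -> list R -> R) (lam x : list R) : Prop :=
  forall eps, 0 < eps -> exists delta, 0 < delta /\
    forall lam' x', length lam' = n -> length x' = n -> pos_vec lam' ->
      Defs.close n delta lam' lam -> Defs.close n delta x' x -> Rabs (F lam' x' - F lam x) < eps.

Section JointContinuity.

Variables (n : nat) (lam x : list R).
Hypotheses (Llam : length lam = n) (Lx : length x = n).

Lemma close_le d d' a c : d <= d' -> Defs.close n d a c -> Defs.close n d' a c.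
Proof. intros H C i Hi; specialize (C i Hi); lra. Qed.

Lemma jcont_const c : jcont n (fun _ _ => c) lam x.
Proof. intros eps He; exists 1; split; [lra|]; intros; rewrite Rminus_diag, Rabs_R0; lra. Qed.

Lemma jcont_weight k : (k < n)%nat -> jcont n (fun l _ => nth k l 0) lam x.
Proof. intros Hk eps He; exists eps; split; [lra|]; intros l' x' _ _ _ C _; apply C, Hk. Qed.

Lemma jcont_rating k : (k < n)%nat -> jcont n (fun _ y => nth k y 0) lam x.
Proof. intros Hk eps He; exists eps; split; [lra|]; intros l' x' _ _ _ _ C; apply C, Hk. Qed.

Lemma jcont_comp h F : continuous h (F lam x) -> jcont n F lam x ->
  jcont n (fun l y => h (F l y)) lam x.
Proof.
  intros Hh HF eps He.
  destruct (proj1 (filterlim_locally h (h (F lam x))) Hh (mkposreal eps He)) as [d Hd].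
  destruct (HF d (cond_pos d)) as [d' [Hd' HF']].
  exists d'; split; [exact Hd'|]; intros.
  apply ball_Rabs, Hd, ball_Rabs; auto.
Qed.

Lemma jcont_op2 (g : R -> R -> R) F1 F2 :
  filterlim (fun z : R * R => g (fst z) (snd z))
    (filter_prod (locally (F1 lam x)) (locally (F2 lam x))) (locally (g (F1 lam x) (F2 lam x))) ->
  jcont n F1 lam x -> jcont n F2 lam x -> jcont n (fun l y => g (F1 l y) (F2 l y)) lam x.
Proof.
  intros Hg H1 H2 eps He.
  destruct (proj1 (filterlim_locally _ _) Hg (mkposreal eps He))
    as [Q S [e1 HQ] [e2 HS] HQS]; simpl in *.
  destruct (H1 e1 (cond_pos e1)) as [d1 [Hd1 H1']].
  destruct (H2 e2 (cond_pos e2)) as [d2 [Hd2 H2']].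
  exists (Rmin d1 d2); split; [apply Rmin_pos; auto|]; intros l' x' L1 L2 P C1 C2.
  apply ball_Rabs, (HQS (F1 l' x') (F2 l' x')).
  - apply HQ, ball_Rabs, H1'; auto; eapply close_le; eauto; apply Rmin_l.
  - apply HS, ball_Rabs, H2'; auto; eapply close_le; eauto; apply Rmin_r.
Qed.

Lemma jcont_plus F1 F2 : jcont n F1 lam x -> jcont n F2 lam x ->
  jcont n (fun l y => F1 l y + F2 l y) lam x.
Proof. apply (jcont_op2 Rplus), (filterlim_plus (V := R_NormedModule)). Qed.

Lemma jcont_mult F1 F2 : jcont n F1 lam x -> jcont n F2 lam x ->
  jcont n (fun l y => F1 l y * F2 l y) lam x.
Proof. apply (jcont_op2 Rmult), (filterlim_mult (K := R_AbsRing)). Qed.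

Lemma jcont_minus F1 F2 : jcont n F1 lam x -> jcont n F2 lam x ->
  jcont n (fun l y => F1 l y - F2 l y) lam x.
Proof.
  intros H1 H2; apply (jcont_plus F1 (fun l y => - F2 l y)); [exact H1|].
  apply (jcont_comp Ropp); [apply ex_derive_continuous_R; auto_derive; exact I | exact H2].
Qed.

Lemma jcont_div F1 F2 : F2 lam x <> 0 -> jcont n F1 lam x -> jcont n F2 lam x ->
  jcont n (fun l y => F1 l y / F2 l y) lam x.
Proof.
  intros Hz H1 H2; apply jcont_mult; [exact H1|].
  apply (jcont_comp Rinv); [|exact H2].
  apply ex_derive_continuous_R; auto_derive; exact Hz.
Qed.

Lemma jcont_lsum (F : nat -> list R -> list R -> R) ks :
  (forall k, In k ks -> jcont n (F k) lam x) ->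
  jcont n (fun l y => lsum (map (fun k => F k l y) ks)) lam x.
Proof.
  induction ks as [|k ks IH]; intros H; simpl.
  - apply jcont_const.
  - apply jcont_plus; [apply H; left; reflexivity | apply IH; intros; apply H; right; auto].
Qed.

Lemma jcont_ext F G : (forall l y, length l = n -> length y = n -> F l y = G l y) ->
  jcont n G lam x -> jcont n F lam x.
Proof.
  intros E H eps He; destruct (H eps He) as [d [Hd H']].
  exists d; split; [exact Hd|]; intros; rewrite !E; auto.
Qed.

Lemma jcont_lsum_map (h : R -> R) :
  (forall k, (k < n)%nat -> continuous h (nth k lam 0)) ->
  jcont n (fun l _ => lsum (map h l)) lam x.
Proof.
  intros Hh.
  apply (jcont_ext _ (fun l _ => lsum (map (fun k => h (nth k l 0)) (seq 0 n)))); auto.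
  { intros l y L _; rewrite lsum_map_nth, L; reflexivity. }
  apply jcont_lsum; intros k Hk; apply in_seq in Hk.
  apply (jcont_comp h (fun l _ => nth k l 0)); [apply Hh; lia | apply jcont_weight; lia].
Qed.

Lemma jcont_lsum_weights : jcont n (fun l _ => lsum l) lam x.
Proof.
  apply (jcont_ext _ (fun l _ => lsum (map (fun a => a) l))); auto.
  - intros; rewrite map_id; reflexivity.
  - apply jcont_lsum_map; intros; apply ex_derive_continuous_R; auto_derive; exact I.
Qed.

Lemma jcont_wsum (g : R -> R) : (forall r, continuous g r) ->
  jcont n (fun l y => wsum g l y) lam x.
Proof.
  intros Hg.
  apply (jcont_ext _ (fun l y => lsum (map (fun k => nth k l 0 * g (nth k y 0)) (seq 0 n))));
    auto.
  { intros l y L L'; rewrite wsum_nth, L by congruence; reflexivity. }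
  apply jcont_lsum; intros k Hk; apply in_seq in Hk.
  apply jcont_mult; [apply jcont_weight; lia|].
  apply (jcont_comp g (fun _ y => nth k y 0)); [apply Hg | apply jcont_rating; lia].
Qed.

Lemma jcont_fixed_weights F : pos_vec lam -> jcont n F lam x ->
  forall eps, 0 < eps -> exists delta, 0 < delta /\
    forall x', length x' = n -> Defs.close n delta x' x -> Rabs (F lam x' - F lam x) < eps.
Proof.
  intros P H eps He; destruct (H eps He) as [d [Hd H']].
  exists d; split; [exact Hd|]; intros x' L C.
  apply H'; auto; intros i _; rewrite Rminus_diag, Rabs_R0; exact Hd.
Qed.

End JointContinuity.

Record generator := Generator {
  gen : R -> R;
  gen' : R -> R;
  gen_inv : R -> R;
  gen_inv' : R -> R;
  gen_dom : R -> Prop;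
  is_derive_gen : forall r, is_derive gen r (gen' r);
  continuous_gen' : forall r, continuous gen' r;
  gen'_pos : forall r, 0 < gen' r;
  is_derive_gen_inv : forall z, gen_dom z -> is_derive gen_inv z (gen_inv' z);
  continuous_gen_inv' : forall z, gen_dom z -> continuous gen_inv' z;
  gen_inv'_pos : forall z, gen_dom z -> 0 < gen_inv' z;
  gen_gen_inv : forall z, gen_dom z -> gen (gen_inv z) = z;
  gen_inv_gen : forall r, gen_inv (gen r) = r;
  gen_dom_mean : forall l y c, pos_vec l -> l <> nil -> length y = length l -> 0 <= c ->
    gen_dom ((wsum gen l y + c) / lsum l) }.

Definition mean_arg (G : generator) (s : list R -> R) (l y : list R) : R :=
  (wsum (gen G) l y + s l) / lsum l.

Definition qmean (G : generator) (s : list R -> R) : rule :=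
  fun l y => gen_inv G (mean_arg G s l y).

Definition qmean_partial (G : generator) (s : list R -> R) (lam : list R) (i : nat)
  (x : list R) : R :=
  nth i lam 0 / lsum lam * gen' G (nth i x 0) * gen_inv' G (mean_arg G s lam x).

Definition grouping_additive (s : list R -> R) : Prop :=
  forall lam m b, (forall i, (i < length lam)%nat -> (b i < m)%nat) ->
    s lam = s (map (fun j => lsum (sub lam b j)) (seq 0 m))
            + lsum (map (fun j => s (sub lam b j)) (seq 0 m)).

Lemma Elo_odds x y : Elo x y / (1 - Elo x y) = Rpower 10 ((x - y) / 400).
Proof.
  unfold Elo, Rpower.
  replace ((y - x) / 400 * ln 10) with (- ((x - y) / 400 * ln 10)) by field.
  rewrite exp_Ropp; assert (0 < exp ((x - y) / 400 * ln 10)) by apply exp_pos.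
  field; lra.
Qed.

Lemma is_derive_unique' (f : R -> R) x a c : is_derive f x a -> is_derive f x c -> a = c.
Proof. intros Ha Hc; rewrite <- (is_derive_unique _ _ _ Ha); apply is_derive_unique, Hc. Qed.

Section QuasiArithmeticMean.

Variables (G : generator) (s : list R -> R).

Hypothesis s_nonneg : forall l, pos_vec l -> 0 <= s l.
Hypothesis s_continuous : forall n lam x, length lam = n -> length x = n -> pos_vec lam ->
  jcont n (fun l _ => s l) lam x.

Lemma mean_arg_dom l y : pos_vec l -> l <> nil -> length y = length l ->
  gen_dom G (mean_arg G s l y).
Proof. intros P Hl L; apply gen_dom_mean; auto. Qed.

Lemma is_derive_qmean lam x i : pos_vec lam -> lam <> nil -> length x = length lam ->
  (i < length x)%nat ->
  is_derive (fun t => qmean G s lam (upd x i t)) (nth i x 0) (qmean_partial G s lam i x).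
Proof.
  intros P Hl L Hi; unfold qmean_partial.
  assert (HL : 0 < lsum lam) by (apply lsum_pos; auto).
  set (c := nth i lam 0 / lsum lam); set (M := mean_arg G s lam x).
  apply (is_derive_ext (fun t => gen_inv G (M + c * (gen G t - gen G (nth i x 0))))).
  { intros t; unfold qmean, M, c, mean_arg; rewrite wsum_upd by lia; f_equal; field; lra. }
  apply (is_derive_comp (gen_inv G) (fun t => M + c * (gen G t - gen G (nth i x 0)))).
  - replace (M + c * (gen G (nth i x 0) - gen G (nth i x 0))) with M by ring.
    apply is_derive_gen_inv, mean_arg_dom; auto.
  - auto_derive.
    + exists (gen' G (nth i x 0)); apply is_derive_gen.
    + rewrite (is_derive_unique _ _ _ (is_derive_gen G _)); ring.
Qed.

Lemma jcont_mean_arg n lam x : length lam = n -> length x = n -> pos_vec lam -> lam <> nil ->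
  jcont n (mean_arg G s) lam x.
Proof.
  intros L1 L2 P Hl; unfold mean_arg.
  apply jcont_div.
  - apply Rgt_not_eq, lsum_pos; auto.
  - apply jcont_plus; [apply jcont_wsum; auto | apply s_continuous; auto].
    intros r; apply ex_derive_continuous_R; exists (gen' G r); apply is_derive_gen.
  - apply jcont_lsum_weights; auto.
Qed.

Lemma jcont_qmean_partial n lam x i : length lam = n -> length x = n -> pos_vec lam ->
  (i < n)%nat -> jcont n (fun l y => qmean_partial G s l i y) lam x.
Proof.
  intros L1 L2 P Hi; assert (Hl : lam <> nil) by (apply length_pos_nonnil; lia).
  unfold qmean_partial; apply jcont_mult; [apply jcont_mult|].
  - apply jcont_div; [|apply jcont_weight; lia | apply jcont_lsum_weights; auto].
    apply Rgt_not_eq, lsum_pos; auto.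
  - apply (jcont_comp n lam x (gen' G) (fun _ y => nth i y 0));
      [apply continuous_gen' | apply jcont_rating; lia].
  - apply (jcont_comp n lam x (gen_inv' G) (mean_arg G s)).
    + apply continuous_gen_inv', mean_arg_dom; auto; lia.
    + apply jcont_mean_arg; auto.
Qed.

Lemma qmean_partial_pos lam x i : pos_vec lam -> lam <> nil -> length x = length lam ->
  (i < length lam)%nat -> 0 < qmean_partial G s lam i x.
Proof.
  intros P Hl L Hi; unfold qmean_partial.
  assert (0 < nth i lam 0) by (apply pos_vec_In with lam; auto; apply nth_In; lia).
  assert (0 < lsum lam) by (apply lsum_pos; auto).
  assert (0 < gen' G (nth i x 0)) by apply gen'_pos.
  assert (0 < gen_inv' G (mean_arg G s lam x)) by (apply gen_inv'_pos, mean_arg_dom; auto).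
  apply Rmult_lt_0_compat; [apply Rmult_lt_0_compat|]; auto.
  apply Rdiv_lt_0_compat; auto.
Qed.

Lemma qmean_Ax2 : Ax2 (qmean G s).
Proof.
  intros n Hn; split.
  - intros lam x L1 L2 P.
    assert (Hl : lam <> nil) by (apply length_pos_nonnil; lia).
    apply (jcont_comp n lam x (gen_inv G) (mean_arg G s)); [|apply jcont_mean_arg; auto].
    apply ex_derive_continuous_R; eexists; apply is_derive_gen_inv, mean_arg_dom; auto; lia.
  - intros lam L P; assert (Hl : lam <> nil) by (apply length_pos_nonnil; lia).
    exists (qmean_partial G s lam); split; [|split]; intros i x Hi Lx.
    + apply is_derive_qmean; auto; lia.
    + apply (jcont_fixed_weights n lam x L (fun l y => qmean_partial G s l i y) P).
      apply jcont_qmean_partial; auto.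
    + apply qmean_partial_pos; auto; lia.
Qed.

Lemma mean_arg_repeat l r : pos_vec l -> l <> nil ->
  mean_arg G s l (repeat r (length l)) = gen G r + s l / lsum l.
Proof.
  intros P Hl; assert (0 < lsum l) by (apply lsum_pos; auto).
  unfold mean_arg; rewrite wsum_repeat; field; lra.
Qed.

Lemma qmean_Ax1_iff : Ax1 (qmean G s) <-> forall l, pos_vec l -> l <> nil -> s l = 0.
Proof.
  split.
  - intros H1 l P Hl; assert (0 < lsum l) by (apply lsum_pos; auto).
    specialize (H1 l 0 Hl P); unfold qmean in H1; apply (f_equal (gen G)) in H1.
    rewrite gen_gen_inv, mean_arg_repeat in H1
      by (try apply mean_arg_dom; auto; apply repeat_length).
    replace (s l) with (s l / lsum l * lsum l) by (field; lra).
    replace (s l / lsum l) with 0 by lra; ring.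
  - intros H0 l r Hl P; unfold qmean.
    rewrite mean_arg_repeat, H0, Rdiv_0_l, Rplus_0_r by auto; apply gen_inv_gen.
Qed.

Hypothesis s_grouping : grouping_additive s.

Lemma qmean_Ax3 : Ax3 (qmean G s).
Proof.
  intros n lam x Hn L1 L2 P m b Hb Hs.
  assert (Hb' : forall i, (i < length lam)%nat -> (b i < m)%nat) by (rewrite L1; exact Hb).
  assert (Hblk : forall j, In j (seq 0 m) -> pos_vec (sub lam b j) /\ sub lam b j <> nil)
    by (intros j Hj; apply in_seq in Hj; apply (sub_block_pos b m n); auto; lia).
  unfold qmean at 1 2; f_equal; unfold mean_arg at 1 2.
  rewrite (s_grouping lam m b Hb'), (wsum_sub b m (gen G) lam x), (lsum_sub b m lam Hb'),
    wsum_map by (auto; lia).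
  rewrite (lsum_map_ext (fun j => lsum (sub lam b j) * gen G (qmean G s (sub lam b j) (sub x b j)))
    (fun j => wsum (gen G) (sub lam b j) (sub x b j) + s (sub lam b j))).
  - rewrite lsum_map_plus; f_equal; ring.
  - intros j Hj; destruct (Hblk j Hj) as [Pj Nj].
    assert (0 < lsum (sub lam b j)) by (apply lsum_pos; auto).
    unfold qmean; rewrite gen_gen_inv by (apply mean_arg_dom; auto; apply length_sub; lia).
    unfold mean_arg; field; lra.
Qed.

Lemma qmean_Ax4_iff :
  Ax4 (qmean G s) <-> forall x y, gen' G x / gen' G y = Rpower 10 ((x - y) / 400).
Proof.
  assert (P : pos_vec [1; 1]) by (repeat constructor; lra).
  assert (Hd : forall x y,
    is_derive (fun t => qmean G s [1; 1] [t; y]) x (qmean_partial G s [1; 1] 0 [x; y]) /\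
    is_derive (fun t => qmean G s [1; 1] [x; t]) y (qmean_partial G s [1; 1] 1 [x; y]))
    by (split; apply is_derive_qmean; auto; try discriminate; simpl; lia).
  assert (Hr : forall x y, qmean_partial G s [1; 1] 0 [x; y] / qmean_partial G s [1; 1] 1 [x; y]
                           = gen' G x / gen' G y).
  { intros x y; unfold qmean_partial; simpl.
    assert (0 < gen' G y) by apply gen'_pos.
    assert (0 < gen_inv' G (mean_arg G s [1; 1] [x; y]))
      by (apply gen_inv'_pos, mean_arg_dom; auto; discriminate).
    field; lra. }
  split.
  - intros H x y; destruct (H x y) as [dx [dy [Hx [Hy [E1 E2]]]]]; destruct (Hd x y) as [Hx' Hy'].
    rewrite <- Hr, <- E2, <- E1, (is_derive_unique' _ _ _ _ Hx Hx'),
      (is_derive_unique' _ _ _ _ Hy Hy').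
    reflexivity.
  - intros H x y; destruct (Hd x y) as [Hx Hy]; eexists _, _.
    split; [exact Hx | split; [exact Hy | split; [|apply Elo_odds]]].
    rewrite Hr, Elo_odds; apply H.
Qed.

End QuasiArithmeticMean.

Lemma ln10_pos : 0 < ln 10.
Proof. rewrite <- ln_1; apply ln_increasing; lra. Qed.

Lemma qf_pos r : 0 < qf r.
Proof. apply exp_pos. Qed.

Lemma qf_qinv z : 0 < z -> qf (qinv z) = z.
Proof.
  intros Hz; unfold qf, qinv, Rpower.
  replace (400 * (ln z / ln 10) / 400 * ln 10) with (ln z)
    by (field; apply Rgt_not_eq, ln10_pos).
  apply exp_ln, Hz.
Qed.

Lemma qinv_qf r : qinv (qf r) = r.
Proof. unfold qf, qinv, Rpower; rewrite ln_exp; field; apply Rgt_not_eq, ln10_pos. Qed.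

Lemma qf_ratio x y : qf x / qf y = Rpower 10 ((x - y) / 400).
Proof.
  unfold qf, Rpower; rewrite Rdiv_def, <- exp_Ropp, <- exp_plus; f_equal; unfold Rdiv; ring.
Qed.

Lemma is_derive_qf r : is_derive qf r (ln 10 / 400 * qf r).
Proof. unfold qf, Rpower; auto_derive; [exact I | unfold Rdiv; ring]. Qed.

Lemma is_derive_qinv z : 0 < z -> is_derive qinv z (400 / (ln 10 * z)).
Proof.
  intros Hz; assert (0 < ln 10) by apply ln10_pos.
  unfold qinv; auto_derive; [exact Hz | field; lra].
Qed.

Definition linear_gen : generator := {|
  gen := fun r => r; gen' := fun _ => 1;
  gen_inv := fun z => z; gen_inv' := fun _ => 1;
  gen_dom := fun _ => True;
  is_derive_gen r := ltac:(auto_derive; [exact I | ring]);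
  continuous_gen' r := continuous_const 1 r;
  gen'_pos r := Rlt_0_1;
  is_derive_gen_inv z _ := ltac:(auto_derive; [exact I | ring]);
  continuous_gen_inv' z _ := continuous_const 1 z;
  gen_inv'_pos z _ := Rlt_0_1;
  gen_gen_inv z _ := eq_refl;
  gen_inv_gen r := eq_refl;
  gen_dom_mean l y c _ _ _ _ := I |}.

Lemma continuous_qf' r : continuous (fun r => ln 10 / 400 * qf r) r.
Proof. apply ex_derive_continuous_R; unfold qf, Rpower; auto_derive; exact I. Qed.

Lemma continuous_qinv' z : 0 < z -> continuous (fun z => 400 / (ln 10 * z)) z.
Proof.
  intros Hz; assert (0 < ln 10) by apply ln10_pos.
  apply ex_derive_continuous_R; auto_derive; apply Rgt_not_eq, Rmult_lt_0_compat; auto.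
Qed.

Lemma qf'_pos r : 0 < ln 10 / 400 * qf r.
Proof.
  apply Rmult_lt_0_compat; [|apply qf_pos].
  apply Rdiv_lt_0_compat; [apply ln10_pos | lra].
Qed.

Lemma qinv'_pos z : 0 < z -> 0 < 400 / (ln 10 * z).
Proof.
  intros Hz; apply Rdiv_lt_0_compat; [lra|].
  apply Rmult_lt_0_compat; [apply ln10_pos | exact Hz].
Qed.

Lemma qf_mean_pos l y c : pos_vec l -> l <> nil -> length y = length l -> 0 <= c ->
  0 < (wsum qf l y + c) / lsum l.
Proof.
  intros P Hl L Hc; apply Rdiv_lt_0_compat; [|apply lsum_pos; auto].
  assert (0 < wsum qf l y) by (apply wsum_pos; auto; apply qf_pos); lra.
Qed.

Definition elo_gen : generator := {|
  gen := qf; gen' := fun r => ln 10 / 400 * qf r;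
  gen_inv := qinv; gen_inv' := fun z => 400 / (ln 10 * z);
  gen_dom := fun z => 0 < z;
  is_derive_gen := is_derive_qf;
  continuous_gen' := continuous_qf';
  gen'_pos := qf'_pos;
  is_derive_gen_inv := is_derive_qinv;
  continuous_gen_inv' := continuous_qinv';
  gen_inv'_pos := qinv'_pos;
  gen_gen_inv := qf_qinv;
  gen_inv_gen := qinv_qf;
  gen_dom_mean := qf_mean_pos |}.

Lemma qmean_elo_Ax4 s : (forall l, pos_vec l -> 0 <= s l) -> Ax4 (qmean elo_gen s).
Proof.
  intros Hs; apply qmean_Ax4_iff; auto; intros x y; simpl.
  rewrite <- qf_ratio; assert (0 < ln 10) by apply ln10_pos.
  assert (0 < qf y) by apply qf_pos; field; lra.
Qed.

Lemma qmean_linear_not_Ax4 s : (forall l, pos_vec l -> 0 <= s l) -> ~ Ax4 (qmean linear_gen s).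
Proof.
  intros Hs H; pose proof (proj1 (qmean_Ax4_iff linear_gen s Hs) H 400 0) as E; simpl in E.
  replace ((400 - 0) / 400) with 1 in E by field; rewrite Rpower_1 in E; lra.
Qed.

Definition zero_shift : list R -> R := fun _ => 0.

Lemma zero_shift_nonneg l : pos_vec l -> 0 <= zero_shift l.
Proof. intros; unfold zero_shift; lra. Qed.

Lemma zero_shift_continuous n lam x : jcont n (fun l _ => zero_shift l) lam x.
Proof. unfold zero_shift; apply jcont_const. Qed.

Lemma zero_shift_grouping : grouping_additive zero_shift.
Proof. intros lam m b _; unfold zero_shift; rewrite lsum_map_zero; ring. Qed.

Lemma qmean_zero_shift_Ax1 G : Ax1 (qmean G zero_shift).
Proof. exact (proj2 (qmean_Ax1_iff G zero_shift zero_shift_nonneg) (fun _ _ _ => eq_refl)). Qed.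

Lemma qmean_zero_shift_Ax2 G : Ax2 (qmean G zero_shift).
Proof. apply qmean_Ax2; [exact zero_shift_nonneg | intros; apply zero_shift_continuous]. Qed.

(** [eta] times the unnormalized entropy [lsum l * H (weights l)]. *)
Definition entropy_shift (eta : R) (l : list R) : R :=
  eta * (lsum l * ln (lsum l) - lsum (map (fun a => a * ln a) l)).

Lemma entropy_shift_nonneg eta l : 0 <= eta -> pos_vec l -> 0 <= entropy_shift eta l.
Proof.
  intros He P; unfold entropy_shift; apply Rmult_le_pos; [exact He|].
  replace (lsum l * ln (lsum l) - lsum (map (fun a => a * ln a) l))
    with (lsum (map (fun a => a * (ln (lsum l) - ln a)) l)).
  - apply lsum_map_nonneg; intros a Ha.
    assert (0 < a) by (eapply pos_vec_In; eauto).
    assert (ln a <= ln (lsum l)) by (apply ln_le; [|apply In_le_lsum]; auto).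
    nra.
  - rewrite (lsum_map_ext _ (fun a => ln (lsum l) * a - a * ln a)) by (intros; ring).
    rewrite lsum_map_minus, lsum_map_scal, map_id; ring.
Qed.

Lemma entropy_shift_continuous eta n lam x : length lam = n -> length x = n -> pos_vec lam ->
  jcont n (fun l _ => entropy_shift eta l) lam x.
Proof.
  intros L1 L2 P; unfold entropy_shift.
  destruct (Nat.eq_dec n 0) as [->|Hn].
  { destruct lam; [|discriminate]; intros eps He; exists 1; split; [lra|].
    intros [|] x' L _ _ _ _; [|discriminate]; rewrite Rminus_diag, Rabs_R0; exact He. }
  assert (HL : 0 < lsum lam) by (apply lsum_pos, length_pos_nonnil; auto; lia).
  apply jcont_mult; [apply jcont_const | apply jcont_minus].
  - apply jcont_mult; [apply jcont_lsum_weights; auto|].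
    apply (jcont_comp n lam x ln (fun l _ => lsum l)); [|apply jcont_lsum_weights; auto].
    apply ex_derive_continuous_R; auto_derive; exact HL.
  - apply jcont_lsum_map; auto; intros k Hk.
    assert (0 < nth k lam 0) by (apply pos_vec_In with lam; auto; apply nth_In; lia).
    apply ex_derive_continuous_R; auto_derive; lra.
Qed.

Lemma entropy_shift_grouping eta : grouping_additive (entropy_shift eta).
Proof.
  intros lam m b Hb; unfold entropy_shift.
  rewrite (lsum_sub b m lam Hb) at 1 2; rewrite (lsum_map_sub b m _ lam Hb), map_map.
  rewrite (lsum_map_ext (fun j => eta * (lsum (sub lam b j) * ln (lsum (sub lam b j))
      - lsum (map (fun a => a * ln a) (sub lam b j))))
    (fun j => eta * (lsum (sub lam b j) * ln (lsum (sub lam b j)))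
      - eta * lsum (map (fun a => a * ln a) (sub lam b j)))) by (intros; ring).
  rewrite lsum_map_minus, !lsum_map_scal; ring.
Qed.

(** [Ax2 C] unfolds to [forall n, (1 <= n)%nat -> Ax2_at n C]. *)
Definition Ax2_at (n : nat) (C : rule) : Prop :=
  (forall lam x, length lam = n -> length x = n -> pos_vec lam ->
     forall eps, 0 < eps -> exists delta, 0 < delta /\
       forall lam' x', length lam' = n -> length x' = n -> pos_vec lam' ->
         Defs.close n delta lam' lam -> Defs.close n delta x' x ->
         Rabs (C lam' x' - C lam x) < eps)
  /\
  (forall lam, length lam = n -> pos_vec lam ->
     exists D : nat -> list R -> R,
       (forall i x, (i < n)%nat -> length x = n ->
          is_derive (fun t => C lam (upd x i t)) (nth i x 0) (D i x))
       /\ (forall i x, (i < n)%nat -> length x = n ->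
          forall eps, 0 < eps -> exists delta, 0 < delta /\
            forall x', length x' = n -> Defs.close n delta x' x ->
              Rabs (D i x' - D i x) < eps)
       /\ (forall i x, (i < n)%nat -> length x = n -> 0 < D i x)).

Lemma Ax2_at_ext n C C' :
  (forall l y, length l = n -> length y = n -> pos_vec l -> C l y = C' l y) ->
  Ax2_at n C -> Ax2_at n C'.
Proof.
  intros E [Hc Hd]; split.
  - intros lam x L1 L2 P eps He; destruct (Hc lam x L1 L2 P eps He) as [d [Hd' H]].
    exists d; split; [exact Hd'|]; intros; rewrite <- !E; auto.
  - intros lam L P; destruct (Hd lam L P) as [D [HD HD']]; exists D; split; [|exact HD'].
    intros i x Hi Lx; apply (is_derive_ext (fun t => C lam (upd x i t))); [|auto].
    intros t; apply E; rewrite ?length_upd; auto; lia.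
Qed.

Section Transfer.

Variables C C' : rule.
Hypothesis agree : forall l y, pos_vec l -> l <> nil -> C l y = C' l y.

Lemma Ax1_transfer : Ax1 C -> Ax1 C'.
Proof. intros H lam r Hl P; rewrite <- agree; auto. Qed.

Lemma Ax2_transfer : Ax2 C -> Ax2 C'.
Proof.
  intros H n Hn; apply (Ax2_at_ext n C); [|apply H, Hn].
  intros l y L _ P; apply agree, length_pos_nonnil; auto; lia.
Qed.

Lemma Ax3_transfer : Ax3 C -> Ax3 C'.
Proof.
  intros H n lam x Hn L1 L2 P m b Hb Hs.
  assert (Hm : (0 < m)%nat) by (specialize (Hb 0%nat); lia).
  rewrite <- agree by (try apply length_pos_nonnil; auto; lia).
  rewrite (H n lam x Hn L1 L2 P m b Hb Hs), agree.
  - f_equal; apply map_ext_in; intros j Hj; apply in_seq in Hj.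
    destruct (sub_block_pos b m n lam j); auto; lia.
  - apply (pos_vec_block_sums b m n lam); auto.
  - apply length_pos_nonnil; rewrite length_map, length_seq; exact Hm.
Qed.

End Transfer.

Lemma Ax4_transfer C C' : (forall y, C [1; 1] y = C' [1; 1] y) -> Ax4 C -> Ax4 C'.
Proof.
  intros agree H x y; destruct (H x y) as [dx [dy [Hx [Hy Hr]]]]; exists dx, dy.
  split; [|split; [|exact Hr]]; (eapply is_derive_ext; [|eassumption]); intros; apply agree.
Qed.

Lemma rule_a_qmean : rule_a = qmean linear_gen zero_shift.
Proof.
  apply functional_extensionality; intros l; apply functional_extensionality; intros y.
  unfold rule_a, qmean, mean_arg, zero_shift, wsum; simpl.
  rewrite (lsum_map_ext _ (fun p => / lsum l * (fst p * snd p))) by (intros; unfold Rdiv; ring).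
  rewrite lsum_map_scal; unfold Rdiv; ring.
Qed.

Lemma rule_b_small l y : (length l <= 2)%nat -> rule_b l y = qmean elo_gen zero_shift l y.
Proof.
  intros H; unfold rule_b; apply Nat.leb_le in H; rewrite H.
  unfold qmean, mean_arg, zero_shift; simpl; rewrite Rplus_0_r; reflexivity.
Qed.

Lemma rule_b_big l y : (2 < length l)%nat -> rule_b l y = qmean linear_gen zero_shift l y.
Proof.
  intros H; unfold rule_b; destruct (Nat.leb_spec (length l) 2); [lia|].
  unfold qmean, mean_arg, zero_shift; simpl; rewrite Rplus_0_r; reflexivity.
Qed.

Lemma rule_c_qmean eta l y : pos_vec l -> l <> nil ->
  rule_c eta l y = qmean elo_gen (entropy_shift eta) l y.
Proof.
  intros P Hl; assert (HL : 0 < lsum l) by (apply lsum_pos; auto).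
  unfold rule_c, qmean, mean_arg, entropy_shift, entropy, weights; simpl; f_equal.
  change (lsum (map (fun p => fst p * qf (snd p)) (combine (map (fun a => a / lsum l) l) y)))
    with (wsum qf (map (fun a => a / lsum l) l) y).
  rewrite wsum_map_div, map_map.
  rewrite (lsum_map_ext _ (fun a => / lsum l * (a * ln a) - ln (lsum l) / lsum l * a)).
  - rewrite lsum_map_minus, !lsum_map_scal, map_id; field; lra.
  - intros a Ha; assert (0 < a) by (eapply pos_vec_In; eauto).
    rewrite ln_div by auto; field; lra.
Qed.

Lemma rule_a_axioms : Ax1 rule_a /\ Ax2 rule_a /\ Ax3 rule_a /\ ~ Ax4 rule_a.
Proof.
  rewrite rule_a_qmean; split; [|split; [|split]].
  - apply qmean_zero_shift_Ax1.
  - apply qmean_zero_shift_Ax2.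
  - apply qmean_Ax3; [exact zero_shift_nonneg | exact zero_shift_grouping].
  - apply qmean_linear_not_Ax4, zero_shift_nonneg.
Qed.

Lemma rule_b_Ax1 : Ax1 rule_b.
Proof.
  intros lam r Hl P; destruct (Nat.le_gt_cases (length lam) 2) as [Hs|Hb].
  - rewrite rule_b_small by exact Hs; apply qmean_zero_shift_Ax1; auto.
  - rewrite rule_b_big by exact Hb; apply qmean_zero_shift_Ax1; auto.
Qed.

Lemma rule_b_Ax2 : Ax2 rule_b.
Proof.
  intros n Hn; destruct (Nat.le_gt_cases n 2) as [Hs|Hb].
  - apply (Ax2_at_ext n (qmean elo_gen zero_shift)).
    + intros l y L _ _; rewrite rule_b_small; [reflexivity | lia].
    + apply qmean_zero_shift_Ax2, Hn.
  - apply (Ax2_at_ext n (qmean linear_gen zero_shift)).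
    + intros l y L _ _; rewrite rule_b_big; [reflexivity | lia].
    + apply qmean_zero_shift_Ax2, Hn.
Qed.

Lemma rule_b_Ax4 : Ax4 rule_b.
Proof.
  apply (Ax4_transfer (qmean elo_gen zero_shift)); [|apply qmean_elo_Ax4, zero_shift_nonneg].
  intros y; rewrite rule_b_small; auto.
Qed.

(* Grouping the ratings (0, 0, 400) as {0} | {0, 400}: the left side is their arithmetic
   mean 400/3, the right side is q^-1 of (1 + 2 * 11/2) / 3 = 4, i.e. 400 log10 4;
   equality would force 4^3 = 10. *)
Lemma rule_b_not_Ax3 : ~ Ax3 rule_b.
Proof.
  intros H.
  set (b i := if Nat.eqb i 0 then 0%nat else 1%nat).
  specialize (H 3%nat [1; 1; 1] [0; 0; 400] ltac:(lia) eq_refl eq_refl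
    ltac:(repeat constructor; lra) 2%nat b).
  assert (Hb : forall i, (i < 3)%nat -> (b i < 2)%nat)
    by (intros i _; unfold b; destruct (Nat.eqb i 0); lia).
  assert (Hs : forall j, (j < 2)%nat -> exists i, (i < 3)%nat /\ b i = j)
    by (intros [|[|j]] Hj; [exists 0%nat | exists 1%nat | lia]; split; auto; lia).
  specialize (H Hb Hs); clear Hb Hs.
  cbn -[qinv qf Rdiv] in H.
  assert (Q0 : qf 0 = 1) by (unfold qf, Rpower; rewrite Rdiv_0_l, Rmult_0_l; apply exp_0).
  assert (Q4 : qf 400 = 10) by (unfold qf; rewrite Rdiv_diag, Rpower_1; lra).
  rewrite Q0, Q4, !qf_qinv in H by (apply Rdiv_lt_0_compat; lra).
  match type of H with ?l = qinv ?a =>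
    replace a with 4 in H by field; replace l with (400 / 3) in H by field end.
  unfold qinv in H; assert (Hl : 0 < ln 10) by apply ln10_pos.
  assert (E : ln 4 = ln 10 / 3).
  { replace (ln 4) with (400 * (ln 4 / ln 10) * ln 10 / 400) by (field; lra).
    rewrite <- H; field. }
  assert (E64 : ln (4 * (4 * 4)) = ln 10) by (rewrite !ln_mult, E by lra; field).
  apply ln_inv in E64; lra.
Qed.

Lemma rule_c_axioms eta : 0 < eta ->
  Ax2 (rule_c eta) /\ Ax3 (rule_c eta) /\ Ax4 (rule_c eta) /\ ~ Ax1 (rule_c eta).
Proof.
  intros He.
  assert (Hs : forall l, pos_vec l -> 0 <= entropy_shift eta l)
    by (intros; apply entropy_shift_nonneg; auto; lra).
  assert (A : forall l y, pos_vec l -> l <> nil ->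
      qmean elo_gen (entropy_shift eta) l y = rule_c eta l y)
    by (intros; symmetry; apply rule_c_qmean; auto).
  split; [|split; [|split]].
  - apply (Ax2_transfer _ _ A), qmean_Ax2; [exact Hs | apply entropy_shift_continuous].
  - apply (Ax3_transfer _ _ A), qmean_Ax3; [exact Hs | apply entropy_shift_grouping].
  - apply (Ax4_transfer (qmean elo_gen (entropy_shift eta))), qmean_elo_Ax4, Hs.
    intros y; apply A; [repeat constructor; lra | discriminate].
  - intros H1; apply (Ax1_transfer _ _ (rule_c_qmean eta)) in H1.
    assert (E : entropy_shift eta [1; 1] = 0)
      by (apply (qmean_Ax1_iff elo_gen _ Hs); auto; [repeat constructor; lra | discriminate]).
    unfold entropy_shift in E; simpl in E; rewrite ln_1 in E.
    replace (1 + (1 + 0)) with 2 in E by ring.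
    assert (0 < ln 2) by (rewrite <- ln_1; apply ln_increasing; lra).
    nra.
Qed.

Theorem proposition4 :
  (Ax1 rule_a /\ Ax2 rule_a /\ Ax3 rule_a /\ ~ Ax4 rule_a) /\
  (Ax1 rule_b /\ Ax2 rule_b /\ Ax4 rule_b /\ ~ Ax3 rule_b) /\
  (forall eta : R, 0 < eta ->
     Ax2 (rule_c eta) /\ Ax3 (rule_c eta) /\ Ax4 (rule_c eta) /\ ~ Ax1 (rule_c eta)).
Proof.
  split; [exact rule_a_axioms | split; [|exact rule_c_axioms]].
  exact (conj rule_b_Ax1 (conj rule_b_Ax2 (conj rule_b_Ax4 rule_b_not_Ax3))).
Qed.
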